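(* Let $X$ be a real Hilbert space and let $T_1,T_2,T_3\colon X\to X$ be $\sigma_1$-, $\sigma_2$-, and $\sigma_3$-cocoercive, respectively. Let $\eta,\nu,\lambda,\delta>0$, set $S:=-\nu\mathrm{Id}+\lambda T_1-\delta T_3T_1$ and $$T:=\mathrm{Id}-\eta T_1+\eta T_2 S.$$ (i) If $\lambda=2\nu\sigma_1=2\sigma_2$ and $\eta^*:=\frac{1}{\nu}\big(\lambda-\frac{\delta}{2\sigma_3}\big)>0$, then for all $x,y\in X$, $$\|Tx-Ty\|^2\le\|x-y\|^2-\Big(\frac{\eta^*}{\eta}-1\Big)\|(\mathrm{Id}-T)x-(\mathrm{Id}-T)y\|^2-\frac{\delta}{2\eta\nu\sigma_3}\|(\mathrm{Id}-T)x-(\mathrm{Id}-T)y-2\eta\sigma_3(T_3T_1x-T_3T_1y)\|^2.$$ (ii) If $\lambda<\nu\sigma_1+\sigma_2$ and $$\eta^*:=\frac{1}{\nu}\Big(\frac{(2\nu\sigma_1-\lambda)(2\sigma_2-\lambda)}{2(\nu\sigma_1+\sigma_2-\lambda)}+\lambda-\frac{\delta}{2\sigma_3}\Big)>0,$$ then for all $x,y\in X$, $$\|Tx-Ty\|^2\le\|x-y\|^2-\Big(\frac{\eta^*}{\eta}-1\Big)\|(\mathrm{Id}-T)x-(\mathrm{Id}-T)y\|^2-\frac{\delta}{2\eta\nu\sigma_3}\|(\mathrm{Id}-T)x-(\mathrm{Id}-T)y-2\eta\sigma_3(T_3T_1x-T_3T_1y)\|^2$$ $$\qquad-\frac{\eta}{2\nu(\nu\sigma_1+\sigma_2-\lambda)}\|(2\nu\sigma_1-\lambda)(T_1x-T_1y)+(2\sigma_2-\lambda)(T_2Sx-T_2Sy)\|^2.$$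 In both cases, $T$ is conically $\frac{\eta}{\eta^*}$-averaged.
   Context: An operator $T\colon X\to X$ is $\sigma$-cocoercive ($\sigma>0$) if $\langle x-y,Tx-Ty\rangle\ge\sigma\|Tx-Ty\|^2$ for all $x,y$. An operator $T\colon X\to X$ is conically $\theta$-averaged ($\theta>0$) if $T=(1-\theta)\mathrm{Id}+\theta N$ for some nonexpansive (1-Lipschitz) $N\colon X\to X$. *)

From HB Require Import structures.
From mathcomp Require Import all_boot all_order all_algebra.
From mathcomp Require Import all_classical all_reals all_analysis.
Set Implicit Arguments. Unset Strict Implicit. Unset Printing Implicit Defensive.
Import Order.TTheory GRing.Theory Num.Theory.
Import numFieldNormedType.Exports.
Local Open Scope ring_scope.

(* A real Hilbert space: a complete real normed space V whose norm is induced
   by an inner product [ip] (symmetric, linear in the first argument,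
   and |x|^2 = <x,x>; positive definiteness follows from the norm axioms). *)
Definition hilbert_inner (R : realType) (V : completeNormedModType R)
  (ip : V -> V -> R) : Prop :=
  [/\ (forall x y, ip x y = ip y x),
      (forall a x y z, ip (a *: x + y) z = a * ip x z + ip y z) &
      (forall x, `|x| ^+ 2 = ip x x)].

Definition cocoercive (R : realType) (V : completeNormedModType R)
  (ip : V -> V -> R) (sigma : R) (T : V -> V) : Prop :=
  0 < sigma /\
  forall x y, sigma * `|T x - T y| ^+ 2 <= ip (x - y) (T x - T y).

Definition nonexpansive (R : realType) (V : completeNormedModType R)
  (N : V -> V) : Prop := forall x y, `|N x - N y| <= `|x - y|.

Definition conically_averaged (R : realType) (V : completeNormedModType R)
  (theta : R) (T : V -> V) : Prop :=
  0 < theta /\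
  exists N : V -> V, nonexpansive N /\
    forall x, T x = (1 - theta) *: x + theta *: N x.

From HB Require Import structures.
From mathcomp Require Import all_boot all_order all_algebra.
From mathcomp Require Import all_classical all_reals all_analysis.
From mathcomp Require Import ring lra.
Import Order.TTheory GRing.Theory Num.Theory.
Import numFieldNormedType.Exports.
Local Open Scope ring_scope.

(* Write u = x - y, t1 = T1x - T1y, t2 = T2Sx - T2Sy, t3 = T3T1x - T3T1y, so
   that (Id - T)x - (Id - T)y = eta (t1 - t2) and Sx - Sy = -nu u + lam t1 -
   del t3.  Expanding the inner products gives an exact identity
   [descent_identity]: |Tx - Ty|^2 equals the claimed right-hand side, minus
   eta/nu times a quadratic form [coupling_form] in (t1, t2), minus positive
   multiples of the three cocoercivity slacks
     <u, t1> - s1|t1|^2,  <Sx - Sy, t2> - s2|t2|^2,  <t1, t3> - s3|t3|^2.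
   Hence [fb_descent] bounds |Tx - Ty|^2 for any value of etas.  In case (i)
   the coupling form vanishes ([coupling_form_balanced]); in case (ii) it is
   the extra square of the statement ([coupling_form_strict]); this yields
   the two inequalities [fb_descent_balanced] and [fb_descent_strict].  Dropping
   the nonnegative extra terms leaves the bound
     |Tx - Ty|^2 <= |x - y|^2 - (etas/eta - 1) |(Id - T)x - (Id - T)y|^2,
   which means that T is conically eta/etas-averaged
   ([conically_averaged_of_descent]). *)

Lemma subr_sub3 {M : zmodType} (a b c a' b' c' : M) :
  (a + b + c) - (a' + b' + c') = (a - a') + (b - b') + (c - c').
Proof. by rewrite !opprD addrACA (addrACA a). Qed.

Lemma subrACA {M : zmodType} (a b c d : M) : (a - b) - (c - d) = (a - c) - (b - d).
Proof. by rewrite opprD addrACA -opprD. Qed.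

(* The quadratic form in the increments t1 = T1x - T1y, t2 = T2Sx - T2Sy
   that is left over once the three cocoercivity slacks are extracted;
   rho is the weight of |t1 - t2|^2, related to etas by
   rho = nu * etas + del / (2 * s3). *)
Definition coupling_form {R : realType} {V : completeNormedModType R}
  (ip : V -> V -> R) (nu s1 s2 lam rho : R) (t1 t2 : V) : R :=
  2 * nu * s1 * `|t1| ^+ 2 - 2 * lam * ip t1 t2 + 2 * s2 * `|t2| ^+ 2
  - rho * `|t1 - t2| ^+ 2.

Section InnerProduct.
Context {R : realType} {V : completeNormedModType R} {ip : V -> V -> R}.
Hypothesis hip : hilbert_inner ip.

Lemma ipC x y : ip x y = ip y x.
Proof. by case: hip. Qed.

Lemma ipDl x y z : ip (x + y) z = ip x z + ip y z.
Proof. by case: hip => _ ipl _; rewrite -[x in LHS]scale1r ipl mul1r. Qed.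

Lemma ipZl a x z : ip (a *: x) z = a * ip x z.
Proof.
have ip0l : ip 0 z = 0.
  by case: hip => _ ipl _; have := ipl 1 0 0 z; rewrite scale1r addr0 mul1r; lra.
by case: hip => _ ipl _; rewrite -[a *: x]addr0 ipl ip0l addr0.
Qed.

Lemma ipNl x z : ip (- x) z = - ip x z.
Proof. by rewrite -scaleN1r ipZl mulN1r. Qed.

Lemma ipDr x y z : ip z (x + y) = ip z x + ip z y.
Proof. by rewrite !(ipC z) ipDl. Qed.

Lemma ipZr a x z : ip z (a *: x) = a * ip z x.
Proof. by rewrite !(ipC z) ipZl. Qed.

Lemma ipNr x z : ip z (- x) = - ip z x.
Proof. by rewrite !(ipC z) ipNl. Qed.

Lemma sqr_norm x : `|x| ^+ 2 = ip x x.
Proof. by case: hip. Qed.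

Local Ltac ip_expand := rewrite ?sqr_norm ?(ipDl, ipDr, ipNl, ipNr, ipZl, ipZr).

(* If [T] satisfies the descent bound
     |Tx - Ty|^2 <= |x - y|^2 - (k - 1) |(Id - T)x - (Id - T)y|^2
   with k > 0, then T = (1 - 1/k) Id + (1/k) N for the nonexpansive
   N := Id - k (Id - T): this is the conic averagedness of T. *)
Lemma conically_averaged_of_descent {T : V -> V} {k : R} : 0 < k ->
  (forall x y, `|T x - T y| ^+ 2 <=
     `|x - y| ^+ 2 - (k - 1) * `|(x - T x) - (y - T y)| ^+ 2) ->
  conically_averaged k^-1 T.
Proof.
move=> k_gt0 descent; split; first by rewrite invr_gt0.
exists (fun x => x - k *: (x - T x)); split => [x y|x]; last first.
  by rewrite scalerBr scalerA mulVf ?gt_eqF // scale1r scalerBl scale1r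
             addrA subrK subKr.
have Tdiff : T x - T y = (x - y) - ((x - T x) - (y - T y)).
  by rewrite (subrACA x (T x)) subKr.
rewrite /= subrACA -scalerBr; have := descent x y; rewrite Tdiff.
set u := x - y; set d := (x - T x) - (y - T y); clearbody u d.
move=> bound; rewrite -(ler_pXn2r (n := 2)) ?nnegrE //; move: bound; ip_expand.
rewrite (ipC d u) => bound.
(* the bound says k |d|^2 <= 2 <u, d>; scaled by k it controls |u - k d|^2 *)
have : k * (k * ip d d - 2 * ip u d) <= 0 by rewrite pmulr_rle0 //; lra.
lra.
Qed.

(* The key identity of the proof: the squared increment of T written as the
   right-hand side of the claimed bound minus nonnegative multiples of the
   three cocoercivity slacks (of T1 at x,y; of T2 at Sx,Sy; of T3 at T1x,T1y).
   Here u = x - y, t3 = T3T1x - T3T1y and eta (t1 - t2) = (Id - T)x - (Id - T)y. *)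
Lemma descent_identity (u t1 t2 t3 : V) (s1 s2 s3 eta nu lam del rho : R) :
  eta != 0 -> nu != 0 -> s3 != 0 ->
  `|u - eta *: (t1 - t2)| ^+ 2 =
    `|u| ^+ 2
    - (nu^-1 * (rho - del / (2 * s3)) / eta - 1) * `|eta *: (t1 - t2)| ^+ 2
    - del / (2 * eta * nu * s3) *
        `|eta *: (t1 - t2) - (2 * eta * s3) *: t3| ^+ 2
    - eta / nu * coupling_form ip nu s1 s2 lam rho t1 t2
    - (2 * eta * (ip u t1 - s1 * `|t1| ^+ 2)
       + 2 * eta / nu * (ip (- (nu *: u) + lam *: t1 - del *: t3) t2
                         - s2 * `|t2| ^+ 2)
       + 2 * eta * del / nu * (ip t1 t3 - s3 * `|t3| ^+ 2)).
Proof.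
move=> eta0 nu0 s30; rewrite /coupling_form; ip_expand.
rewrite ?(ipC t1 u) ?(ipC t2 u) ?(ipC t3 u) ?(ipC t2 t1) ?(ipC t3 t1) ?(ipC t3 t2).
by field; rewrite nu0 s30 eta0.
Qed.

Lemma coupling_form_balanced {nu s1 s2 lam : R} {t1 t2 : V} :
  2 * nu * s1 = lam -> 2 * s2 = lam -> coupling_form ip nu s1 s2 lam lam t1 t2 = 0.
Proof.
move=> balanced1 balanced2; rewrite /coupling_form balanced1 balanced2; ip_expand.
by rewrite (ipC t2 t1); ring.
Qed.

Lemma coupling_form_strict {nu s1 s2 lam : R} {t1 t2 : V} :
  nu * s1 + s2 - lam != 0 ->
  coupling_form ip nu s1 s2 lam
    ((2 * nu * s1 - lam) * (2 * s2 - lam) / (2 * (nu * s1 + s2 - lam)) + lam)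
    t1 t2 =
  `|(2 * nu * s1 - lam) *: t1 + (2 * s2 - lam) *: t2| ^+ 2
    / (2 * (nu * s1 + s2 - lam)).
Proof.
move=> D0; rewrite /coupling_form; ip_expand; rewrite (ipC t2 t1).
by field; rewrite D0.
Qed.

End InnerProduct.

Section ForwardBackward.
Context {R : realType} {V : completeNormedModType R} {ip : V -> V -> R}.
Context {T1 T2 T3 : V -> V} {s1 s2 s3 eta nu del : R}.
Variable lam : R.
Hypotheses (hip : hilbert_inner ip) (coco1 : cocoercive ip s1 T1)
  (coco2 : cocoercive ip s2 T2) (coco3 : cocoercive ip s3 T3).
Hypotheses (eta_gt0 : 0 < eta) (nu_gt0 : 0 < nu) (del_gt0 : 0 < del).

Let S x := - (nu *: x) + lam *: T1 x - del *: T3 (T1 x).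
Let T x := x - eta *: T1 x + eta *: T2 (S x).

Lemma id_minus_fb x : x - T x = eta *: (T1 x - T2 (S x)).
Proof. by rewrite /T -addrA opprD addrA subrr add0r opprD opprK scalerBr. Qed.

(* For every weight rho, |Tx - Ty|^2 is bounded by the target expression,
   since the three cocoercivity slacks in [descent_identity] are nonnegative. *)
Lemma fb_descent (rho : R) x y :
  `|T x - T y| ^+ 2 <=
    `|x - y| ^+ 2
    - (nu^-1 * (rho - del / (2 * s3)) / eta - 1)
        * `|(x - T x) - (y - T y)| ^+ 2
    - del / (2 * eta * nu * s3) *
        `|(x - T x) - (y - T y) - (2 * eta * s3) *: (T3 (T1 x) - T3 (T1 y))| ^+ 2
    - eta / nu *
        coupling_form ip nu s1 s2 lam rho (T1 x - T1 y) (T2 (S x) - T2 (S y)).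
Proof.
case: coco1 coco2 coco3 => s1_gt0 C1 [s2_gt0 C2] [s3_gt0 C3].
have -> : T x - T y = (x - y) - ((x - T x) - (y - T y)).
  by rewrite (subrACA x (T x)) subKr.
set u := x - y; set t1 := T1 x - T1 y; set t2 := T2 (S x) - T2 (S y).
set t3 := T3 (T1 x) - T3 (T1 y).
have Sdiff : S x - S y = - (nu *: u) + lam *: t1 - del *: t3.
  by rewrite /S -!scaleNr subr_sub3 -!scalerBr.
have ITdiff : (x - T x) - (y - T y) = eta *: (t1 - t2).
  by rewrite !id_minus_fb -scalerBr subrACA.
rewrite ITdiff (descent_identity hip u t1 t2 t3 s1 s2 s3 eta nu lam del rho)
  ?gt_eqF // lerBlDr lerDl.
have slack1 : 0 <= ip u t1 - s1 * `|t1| ^+ 2 by rewrite subr_ge0; exact: C1.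
have slack2 : 0 <= ip (- (nu *: u) + lam *: t1 - del *: t3) t2 - s2 * `|t2| ^+ 2.
  by rewrite subr_ge0 -Sdiff; exact: C2.
have slack3 : 0 <= ip t1 t3 - s3 * `|t3| ^+ 2 by rewrite subr_ge0; exact: C3.
by rewrite !addr_ge0 // mulr_ge0 // ?divr_ge0 ?mulr_ge0 // ltW.
Qed.

Lemma fb_descent_balanced x y : lam = 2 * nu * s1 -> lam = 2 * s2 ->
  `|T x - T y| ^+ 2 <=
    `|x - y| ^+ 2
    - (nu^-1 * (lam - del / (2 * s3)) / eta - 1) * `|(x - T x) - (y - T y)| ^+ 2
    - del / (2 * eta * nu * s3) *
        `|(x - T x) - (y - T y) - (2 * eta * s3) *: (T3 (T1 x) - T3 (T1 y))| ^+ 2.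
Proof.
move=> lam_eq1 lam_eq2; have := fb_descent lam x y.
by rewrite (coupling_form_balanced hip (esym lam_eq1) (esym lam_eq2)) mulr0 subr0.
Qed.

Lemma fb_descent_strict x y : lam < nu * s1 + s2 ->
  `|T x - T y| ^+ 2 <=
    `|x - y| ^+ 2
    - (nu^-1 * ((2 * nu * s1 - lam) * (2 * s2 - lam)
                  / (2 * (nu * s1 + s2 - lam)) + lam - del / (2 * s3)) / eta - 1)
        * `|(x - T x) - (y - T y)| ^+ 2
    - del / (2 * eta * nu * s3) *
        `|(x - T x) - (y - T y) - (2 * eta * s3) *: (T3 (T1 x) - T3 (T1 y))| ^+ 2
    - eta / (2 * nu * (nu * s1 + s2 - lam)) *
        `|(2 * nu * s1 - lam) *: (T1 x - T1 y)
          + (2 * s2 - lam) *: (T2 (S x) - T2 (S y))| ^+ 2.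
Proof.
rewrite -subr_gt0 => D_gt0.
have := fb_descent ((2 * nu * s1 - lam) * (2 * s2 - lam)
                      / (2 * (nu * s1 + s2 - lam)) + lam) x y.
rewrite (coupling_form_strict hip (lt0r_neq0 D_gt0)).
suff -> : forall X, eta / nu * (X / (2 * (nu * s1 + s2 - lam))) =
                    eta / (2 * nu * (nu * s1 + s2 - lam)) * X by [].
by move=> X; field; rewrite !lt0r_neq0.
Qed.

End ForwardBackward.

Theorem proposition3p2 (R : realType) (V : completeNormedModType R)
  (ip : V -> V -> R) (T1 T2 T3 : V -> V) (s1 s2 s3 eta nu lam del : R) :
  hilbert_inner ip ->
  cocoercive ip s1 T1 -> cocoercive ip s2 T2 -> cocoercive ip s3 T3 ->
  0 < eta -> 0 < nu -> 0 < lam -> 0 < del ->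
  let S := fun x => - (nu *: x) + lam *: T1 x - del *: T3 (T1 x) in
  let T := fun x => x - eta *: T1 x + eta *: T2 (S x) in
  let IT := fun x => x - T x in
  (* (i) *)
  (lam = 2 * nu * s1 -> lam = 2 * s2 ->
   let etas := nu^-1 * (lam - del / (2 * s3)) in
   0 < etas ->
   (forall x y,
     `|T x - T y| ^+ 2 <=
       `|x - y| ^+ 2
       - (etas / eta - 1) * `|IT x - IT y| ^+ 2
       - del / (2 * eta * nu * s3) *
           `|IT x - IT y - (2 * eta * s3) *: (T3 (T1 x) - T3 (T1 y))| ^+ 2)
   /\ conically_averaged (eta / etas) T) /\
  (* (ii) *)
  (lam < nu * s1 + s2 ->
   let etas := nu^-1 * ((2 * nu * s1 - lam) * (2 * s2 - lam)
                          / (2 * (nu * s1 + s2 - lam))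
                        + lam - del / (2 * s3)) in
   0 < etas ->
   (forall x y,
     `|T x - T y| ^+ 2 <=
       `|x - y| ^+ 2
       - (etas / eta - 1) * `|IT x - IT y| ^+ 2
       - del / (2 * eta * nu * s3) *
           `|IT x - IT y - (2 * eta * s3) *: (T3 (T1 x) - T3 (T1 y))| ^+ 2
       - eta / (2 * nu * (nu * s1 + s2 - lam)) *
           `|(2 * nu * s1 - lam) *: (T1 x - T1 y)
             + (2 * s2 - lam) *: (T2 (S x) - T2 (S y))| ^+ 2)
   /\ conically_averaged (eta / etas) T).
Proof.
move=> hip coco1 coco2 coco3 eta_gt0 nu_gt0 _ del_gt0 S T IT.
have s3_gt0 : 0 < s3 by case: coco3.
have weight_ge0 : 0 <= del / (2 * eta * nu * s3).
  by rewrite divr_ge0 ?ltW // !mulr_gt0.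
(* once the extra nonnegative terms are dropped, both bounds are descent
   bounds with k = etas / eta *)
have averaged etas : 0 < etas ->
    (forall x y, `|T x - T y| ^+ 2 <=
       `|x - y| ^+ 2 - (etas / eta - 1) * `|IT x - IT y| ^+ 2) ->
    conically_averaged (eta / etas) T.
  move=> etas_gt0 bound; rewrite -invf_div.
  exact: (conically_averaged_of_descent hip (divr_gt0 etas_gt0 eta_gt0) bound).
have descent_i := fb_descent_balanced lam hip coco1 coco2 coco3 eta_gt0 nu_gt0 del_gt0.
have descent_ii := fb_descent_strict lam hip coco1 coco2 coco3 eta_gt0 nu_gt0 del_gt0.
split=> [lam_eq1 lam_eq2 | lam_lt] etas etas_gt0.
- split=> [x y|]; first exact: descent_i.
  apply: averaged => // x y; apply: le_trans (descent_i x y lam_eq1 lam_eq2) _.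
  by rewrite lerBlDr lerDl mulr_ge0.
- have D_gt0 : 0 < nu * s1 + s2 - lam by rewrite subr_gt0.
  split=> [x y|]; first exact: descent_ii.
  apply: averaged => // x y; apply: le_trans (descent_ii x y lam_lt) _.
  rewrite -[leLHS]addrA -opprD lerBlDr lerDl; apply: addr_ge0;
    by apply: mulr_ge0; rewrite // divr_ge0 ?ltW // !mulr_gt0.
Qed.
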